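(* The set $\mathrm{Diag}\,\mathbb P=\{p^{(k)}_k:k\in\mathbb N\}$ is not (R)-dense. Moreover, $\lim_{k\to+\infty}p^{(k+1)}_{k+1}/p^{(k)}_k=+\infty$, and $R^d(\mathrm{Diag}\,\mathbb P)\cap(0,+\infty)=\emptyset$.
   Context: Let $p_n$ denote the $n$-th prime number. Define $p^{(0)}_n=n$ and recursively $p^{(k+1)}_n=p_{p^{(k)}_n}$ for $k\in\mathbb N_0$. For $A\subset\mathbb N$, its ratio set is $R(A)=\{a/b:a,b\in A\}$; $A$ is (R)-dense if $R(A)$ is dense in $(0,+\infty)$. For $B\subset(0,+\infty)$, $B^d$ denotes the set of accumulation points of $B$, and $R^d(A)=(R(A))^d$. *)

From mathcomp Require Import all_boot.
From Stdlib Require Import Reals.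

Set Implicit Arguments.
Unset Strict Implicit.
Unset Printing Implicit Defensive.

Lemma next_prime_ex (m : nat) : exists p, (m < p) && prime p.
Proof. case: (prime_above m) => p H1 H2; exists p; by rewrite H1 H2. Qed.

Definition next_prime (m : nat) : nat := ex_minn (next_prime_ex m).

(* nth_prime n = p_n, 1-indexed: p_1 = 2, p_2 = 3, p_3 = 5, ...
   (p_0 := 1 is a junk value, never used in the statement since only
   indices >= 1 occur). p_{n+1} = least prime above p_n. *)
Fixpoint nth_prime (n : nat) : nat :=
  match n with
  | 0 => 1
  | n'.+1 => next_prime (nth_prime n')
  end.

Definition iter_prime (k n : nat) : nat := iter k nth_prime n.

Definition DiagP (a : nat) : Prop := exists k, (0 < k)%N /\ a = iter_prime k k.

Open Scope R_scope.

Definition ratio_set (A : nat -> Prop) (x : R) : Prop :=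
  exists a b, A a /\ A b /\ x = INR a / INR b.

Definition R_dense (A : nat -> Prop) : Prop :=
  forall x y, 0 < x -> x < y -> exists r, ratio_set A r /\ x < r < y.

Definition accum_points (B : R -> Prop) (x : R) : Prop :=
  forall eps, 0 < eps -> exists y, B y /\ y <> x /\ Rabs (y - x) < eps.

(* Chebyshev's argument: the primes in (n, 2n] all divide 'C(2n, n) <= 4^n, so
   there are at most about n / log n of them; summing over dyadic blocks gives
   pi(x) = o(x), i.e. p_n / n -> oo.  Since p^(k+1)_(k+1) >= p_(p^(k)_k), the
   diagonal d_k = p^(k)_k then satisfies d_(k+1) / d_k -> oo.  Hence for any
   c > 1 every ratio d_a / d_b in (1/c, c) has a = b or both indices below a
   fixed bound: these finitely many values cannot accumulate at any x > 0, and
   in particular R(Diag P) is not dense near 1. *)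

From Stdlib Require Import Reals Lra.
From mathcomp Require Import all_boot zify.

Set Implicit Arguments.
Unset Strict Implicit.
Unset Printing Implicit Defensive.

Local Open Scope nat_scope.

Definition prime_pi (n : nat) : nat := \sum_(0 <= p < n.+1) prime p.

Lemma prime_pi_cat n m : n <= m ->
  prime_pi m = prime_pi n + \sum_(n.+1 <= p < m.+1) prime p.
Proof. by move=> le_nm; rewrite /prime_pi -big_cat_nat. Qed.

Lemma prime_piS n : prime_pi n.+1 = prime_pi n + prime n.+1.
Proof. by rewrite (prime_pi_cat (leqnSn n)) big_nat1. Qed.

Lemma leq_prime_pi n m : n <= m -> prime_pi n <= prime_pi m.
Proof. by move=> le_nm; rewrite (prime_pi_cat le_nm) leq_addr. Qed.

Lemma prime_pi_leq n : prime_pi n <= n.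
Proof.
elim: n => [|n IHn]; first by rewrite /prime_pi big_nat1.
by rewrite prime_piS; case: (prime _); lia.
Qed.

Lemma coprime_fact p n : prime p -> n < p -> coprime p n`!.
Proof.
move=> p_pr; elim: n => [|n IHn] lt_np; first by rewrite coprimen1.
by rewrite factS coprimeMr IHn ?(ltnW lt_np) // andbT prime_coprime // gtnNdvd.
Qed.

Lemma prod_primes_dvd_bin n :
  \prod_(n.+1 <= p < n.*2.+1 | prime p) p %| 'C(n.*2, n).
Proof.
set P := \prod_(_ <= p < _ | _) p.
have coP : coprime P n`!.
  rewrite /P big_nat_cond; apply: (big_ind (coprime^~ n`!)) => [|a b|p /andP[/andP[lt_np _] p_pr]].
  - exact: coprime1n.
  - by rewrite coprimeMl => -> ->.
  - exact: coprime_fact.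
have fact_split : n.*2`! = \prod_(n.+1 <= i < n.*2.+1) i * n`!.
  by rewrite !fact_prod (@big_cat_nat _ _ _ n.+1) 1?mulnC // ltnS -addnn leq_addr.
have prod_eq : \prod_(n.+1 <= i < n.*2.+1) i = 'C(n.*2, n) * n`!.
  apply/eqP; rewrite -(eqn_pmul2r (fact_gt0 n)) -mulnA.
  by rewrite -fact_split; have := bin_fact (leq_addr n n); rewrite addnK addnn => <-.
rewrite -(Gauss_dvdl _ coP) -prod_eq [X in _ %| X](bigID prime) dvdn_mulr //.
Qed.

Lemma expn_prime_pi_sub_leq n m : n <= m ->
  n.+1 ^ (prime_pi m - prime_pi n) <= \prod_(n.+1 <= p < m.+1 | prime p) p.
Proof.
move=> le_nm; rewrite (prime_pi_cat le_nm) addKn expn_sum [X in _ <= X]big_mkcond.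
rewrite big_nat_cond [X in _ <= X]big_nat_cond; apply: leq_prod => p /andP[/andP[lt_np _] _].
by case: (prime p); rewrite ?expn1.
Qed.

Lemma central_bin_leq n : 'C(n.*2, n) <= 4 ^ n.
Proof.
have -> : 4 ^ n = (1 + 1) ^ n.*2 by rewrite -mul2n expnM.
rewrite expnDn (bigD1 (inord n)) ?inordK ?exp1n ?muln1 ?leq_addr //.
by rewrite ltnS -addnn leq_addr.
Qed.

Lemma chebyshev_double n : n.+1 ^ (prime_pi n.*2 - prime_pi n) <= 4 ^ n.
Proof.
have le_n2n : n <= n.*2 by rewrite -addnn leq_addr.
apply: leq_trans (expn_prime_pi_sub_leq le_n2n) _.
apply: leq_trans (central_bin_leq n).
by apply: dvdn_leq; [rewrite bin_gt0 | exact: prod_primes_dvd_bin].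
Qed.

Lemma prime_pi_double_sub_leq c n : 4 ^ c <= n.+1 ->
  c * (prime_pi n.*2 - prime_pi n) <= n.
Proof.
move=> le_4c_n; set d := _ - _.
have [-> | d_gt0] := posnP d; first by rewrite muln0.
rewrite -(@leq_exp2l 4) // expnM (leq_trans _ (chebyshev_double n)) //.
by rewrite leq_exp2r.
Qed.

Lemma prime_pi_sublinear c : exists K, forall x, c * prime_pi x <= 2 * x + K.
Proof.
pose B := (4 ^ c).*2; exists (c * B) => x; elim/ltn_ind: x => x IHx.
have [le_xB | lt_Bx] := leqP x B.
  by rewrite (leq_trans _ (leq_addl _ _)) // leq_mul2l (leq_trans (prime_pi_leq x)) ?orbT.
set m := x./2.
have odd_le1 : odd x <= 1 by case: odd.
have x_eq : x = m.*2 + odd x by rewrite addnC odd_double_half.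
have le_4c_m : 4 ^ c <= m.+1 by rewrite /B in lt_Bx; lia.
have le_c_m : c <= m by have := ltn_expl c (isT : 1 < 4); lia.
have pi_x : prime_pi x <= prime_pi m.*2 + 1.
  rewrite x_eq; case: odd; rewrite ?addn0 ?addn1 ?prime_piS //.
  by case: (prime _); rewrite ?addn0 ?addn1.
have le_m_2m : m <= m.*2 by rewrite -addnn leq_addr.
have split_pi : c * prime_pi x <=
    c * (prime_pi m.*2 - prime_pi m) + c * prime_pi m + c.
  rewrite -mulnDr subnK ?leq_prime_pi // -mulnSr leq_mul2l.
  by rewrite -[(prime_pi _).+1]addn1 pi_x orbT.
have := prime_pi_double_sub_leq le_4c_m; have := IHx m (ltac:(lia)).
lia.
Qed.

Lemma next_primeP m : m < next_prime m /\ prime (next_prime m).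
Proof. by rewrite /next_prime; case: ex_minnP => p /andP[]. Qed.

Lemma nth_primeS_gt n : nth_prime n < nth_prime n.+1.
Proof. exact: (next_primeP _).1. Qed.

Lemma nth_primeS_prime n : prime (nth_prime n.+1).
Proof. exact: (next_primeP _).2. Qed.

Lemma leq_nth_prime : {homo nth_prime : m n / m <= n}.
Proof. by apply: (homo_leq leqnn leq_trans) => n; apply: ltnW (nth_primeS_gt n). Qed.

Lemma nth_prime_gt n : n < nth_prime n.
Proof. by elim: n => [|n IHn] //; apply: leq_ltn_trans IHn (nth_primeS_gt n). Qed.

Lemma prime_pi_nth_prime n : n <= prime_pi (nth_prime n).
Proof.
elim: n => [|n IHn] //; have := nth_primeS_gt n; have := nth_primeS_prime n.
case: (nth_prime n.+1) => [|p] // p_pr lt_p.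
by rewrite prime_piS p_pr addn1 ltnS (leq_trans IHn) ?leq_prime_pi.
Qed.

Lemma nth_prime_superlinear c : exists N, forall n, N <= n -> c * n <= nth_prime n.
Proof.
have [K le_pi] := prime_pi_sublinear (4 * c).
have [-> | c_gt0] := posnP c; first by exists 0.
exists K => n le_Kn; have le_K_cn : K <= c * n by rewrite (leq_trans le_Kn) ?leq_pmull.
have := leq_trans (leq_mul (leqnn (4 * c)) (prime_pi_nth_prime n)) (le_pi (nth_prime n)).
by rewrite -mulnA; lia.
Qed.

Definition diag_prime (k : nat) : nat := iter_prime k k.

Lemma leq_iter_prime k : {homo iter_prime k : m n / m <= n}.
Proof. by move=> m n le_mn; elim: k => [|k IHk] //; apply: leq_nth_prime IHk. Qed.

Lemma leq_iter_prime_id k n : n <= iter_prime k n.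
Proof. by elim: k => [|k IHk] //; apply: leq_trans IHk (ltnW (nth_prime_gt _)). Qed.

Lemma nth_prime_diag_leq k : nth_prime (diag_prime k) <= diag_prime k.+1.
Proof. exact: leq_nth_prime (leq_iter_prime k (leqnSn k)). Qed.

Lemma leq_diag_prime : {homo diag_prime : m n / m <= n}.
Proof.
apply: (homo_leq leqnn leq_trans) => k.
exact: leq_trans (ltnW (nth_prime_gt _)) (nth_prime_diag_leq k).
Qed.

Lemma diag_prime_gt0 k : 0 < k -> 0 < diag_prime k.
Proof. by move=> k_gt0; apply: leq_trans k_gt0 (leq_iter_prime_id k k). Qed.

Lemma diag_prime_growth c :
  exists N, forall k, N <= k -> c * diag_prime k <= diag_prime k.+1.
Proof.
have [N le_nth] := nth_prime_superlinear c; exists N => k le_Nk.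
apply: leq_trans (nth_prime_diag_leq k); apply: le_nth.
exact: leq_trans le_Nk (leq_iter_prime_id k k).
Qed.

Lemma diag_prime_spread c :
  exists N, forall a b, b < a -> N < a -> c * diag_prime b <= diag_prime a.
Proof.
have [N growth] := diag_prime_growth c; exists N => -[//|a] b lt_ba lt_Na.
by apply: leq_trans (growth a lt_Na); rewrite leq_mul2l leq_diag_prime ?orbT.
Qed.

Local Open Scope R_scope.

Lemma INR_le_ratio (c a b : nat) :
  (0 < b)%N -> (c * b <= a)%N -> INR c <= INR a / INR b.
Proof.
move=> b_gt0 le_cb_a; have b_pos : 0 < INR b by apply/lt_0_INR/ltP.
apply: (Rmult_le_reg_r (INR b)) => //.
rewrite /Rdiv Rmult_assoc Rinv_l ?Rmult_1_r -?mult_INR; last lra.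
exact/le_INR/leP.
Qed.

Lemma INR_ratio_le_inv (c a b : nat) :
  (0 < c)%N -> (0 < b)%N -> (c * b <= a)%N -> INR b / INR a <= / INR c.
Proof.
move=> c_gt0 b_gt0 le_cb_a; have c_pos : 0 < INR c by apply/lt_0_INR/ltP.
by rewrite -Rinv_div; apply: Rinv_le_contravar => //; apply: INR_le_ratio.
Qed.

Lemma list_isolated (l : list R) x :
  exists eps, 0 < eps /\ forall y, List.In y l -> y <> x -> eps <= Rabs (y - x).
Proof.
elim: l => [|z l [eps [eps_pos isolated]]]; first by exists 1; split => //; lra.
have [-> | z_neq] := Req_dec z x.
  by exists eps; split => // y [<- | y_in] //; apply: isolated.
exists (Rmin eps (Rabs (z - x))); split.
  by apply: Rmin_pos => //; apply: Rabs_pos_lt; lra.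
move=> y [<- _ | y_in y_neq]; first exact: Rmin_r.
exact: Rle_trans (Rmin_l _ _) (isolated y y_in y_neq).
Qed.

Lemma not_accum_points_of_finite_near (B : R -> Prop) x delta (l : list R) :
  0 < delta -> (forall y, B y -> Rabs (y - x) < delta -> List.In y l) ->
  ~ accum_points B x.
Proof.
move=> delta_pos near_in_l accx.
have [eps [eps_pos isolated]] := list_isolated l x.
have [y [By [y_neq close]]] := accx _ (Rmin_pos _ _ eps_pos delta_pos).
have := isolated y (near_in_l y By (Rlt_le_trans _ _ _ close (Rmin_r _ _))) y_neq.
have := Rmin_l eps delta; lra.
Qed.

Lemma R_dense_accum_points A x : R_dense A -> 0 < x -> accum_points (ratio_set A) x.
Proof.
move=> dense x_pos eps eps_pos.
have [r [Ar lt_r]] := dense x (x + eps) x_pos ltac:(lra).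
exists r; split=> //; split; first lra.
by rewrite Rabs_right; lra.
Qed.

Lemma not_accum_points_diag_ratios x : 0 < x -> ~ accum_points (ratio_set DiagP) x.
Proof.
move=> x_pos; have [c lt_c] := INR_unbounded (x + / x).
have inv_pos : 0 < / x by apply: Rinv_0_lt_compat.
have c_pos : 0 < INR c by lra.
have c_gt0 : (0 < c)%N by apply/ltP/INR_lt; rewrite INR_0.
have lt_invc_x : / INR c < x.
  by rewrite -[x in _ < x]Rinv_inv; apply: Rinv_lt_contravar; [apply: Rmult_lt_0_compat | lra].
have [N spread] := diag_prime_spread c.
pose ratio a b := INR (diag_prime a) / INR (diag_prime b).
pose box := List.seq 0 N.+1.
pose ratios := List.map (fun ab => ratio ab.1 ab.2) (List.list_prod box box).
have in_ratios a b : (a <= N)%N -> (b <= N)%N -> List.In (ratio a b) ratios.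
  move=> le_aN le_bN; apply/List.in_map_iff; exists (a, b); split; first by [].
  by apply/List.in_prod_iff; split; apply/List.in_seq; lia.
apply: (@not_accum_points_of_finite_near _ _ (Rmin (INR c - x) (x - / INR c))
  (1 :: ratios)); first by apply: Rmin_pos; lra.
move=> _ [_ [_ [[a [a_gt0 ->]] [[b [b_gt0 ->]] ->]]]] close.
have [lt_invc_ratio lt_ratio_c] : / INR c < ratio a b < INR c.
  have := Rmin_l (INR c - x) (x - / INR c); have := Rmin_r (INR c - x) (x - / INR c).
  move: close; rewrite -/(diag_prime a) -/(diag_prime b) -/(ratio a b) => /Rabs_def2.
  lra.
case: (ltngtP a b) => [lt_ab | lt_ba | <-].
- have [le_bN | lt_Nb] := leqP b N; first by right; apply: in_ratios; lia.
  have : ratio a b <= / INR c.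
    exact: INR_ratio_le_inv c_gt0 (diag_prime_gt0 a_gt0) (spread _ _ lt_ab lt_Nb).
  lra.
- have [le_aN | lt_Na] := leqP a N; first by right; apply: in_ratios; lia.
  have : INR c <= ratio a b := INR_le_ratio (diag_prime_gt0 b_gt0) (spread _ _ lt_ba lt_Na).
  lra.
- by left; rewrite /ratio /Rdiv Rinv_r //; apply/not_0_INR/eqP; rewrite -lt0n diag_prime_gt0.
Qed.

Theorem theorem12 :
  ~ R_dense DiagP /\
  (forall M : R, exists N : nat, forall k : nat, (N <= k)%nat -> (1 <= k)%nat ->
     M < INR (iter_prime k.+1 k.+1) / INR (iter_prime k k)) /\
  (forall x : R, 0 < x -> ~ accum_points (ratio_set DiagP) x).
Proof.
split; [|split]; last exact: not_accum_points_diag_ratios.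
- move=> dense; apply: (not_accum_points_diag_ratios Rlt_0_1).
  exact: R_dense_accum_points dense Rlt_0_1.
- move=> M; have [c lt_Mc] := INR_unbounded M; have [N spread] := diag_prime_spread c.
  exists N => k le_Nk k_gt0; apply: Rlt_le_trans lt_Mc _.
  exact: INR_le_ratio (diag_prime_gt0 k_gt0) (spread _ _ (ltnSn k) le_Nk).
Qed.
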